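(* There exists an absolute constant $c>0$ such that the following holds. Let $G$ be an abelian group, let $A\subseteq G$ be a finite nonempty set, and let $\kappa=|A+A|/|A|$. Then for each integer $s\ge 1$ there exists a subset $A_{(s)}\subseteq A$ with $|A_{(s)}|\le s$ such that \[ |A+A_{(s)}|\ge c\min(\kappa^{1/3},s)\,|A|. \]
   Context: For subsets $X,Y$ of an abelian group, $X+Y=\{x+y:x\in X,y\in Y\}$. *)

From HB Require Import structures.
From mathcomp Require Import all_boot all_algebra finmap.
From Stdlib Require Import Reals.
Set Implicit Arguments. Unset Strict Implicit. Unset Printing Implicit Defensive.
Local Open Scope fset_scope.

Definition sumset (G : zmodType) (X Y : {fset G}) : {fset G} :=
  [fset GRing.add x y | x in X, y in Y].

Definition doubling (G : zmodType) (A : {fset G}) : R :=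
  (INR #|` sumset A A| / INR #|` A|)%R.

(* Build the set of translates greedily: as long as some a in A has at most
   2|A|/3 partners b in A with a + b in A + S, adding a to S enlarges A + S
   by at least |A|/3. If the process stops before s steps, every a in A has
   more than 2|A|/3 partners in X = A + S, and then each x = r1 + r2 in A + A
   has about 2|A|^2/9 representations x = y1 - y2 + y3 with y1, y2, y3 in X.
   Hence |A + A| |A|^2 = O(|X|^3), i.e. |X| >> kappa^(1/3) |A|. *)

From HB Require Import structures.
From mathcomp Require Import all_boot all_algebra finmap zify.
Set Implicit Arguments. Unset Strict Implicit. Unset Printing Implicit Defensive.
Import GRing.Theory.
Local Open Scope fset_scope.

Lemma card_fset_pairs (T U : choiceType) (A : {fset T}) (B : T -> {fset U}) :
  #|` [fset (x, y) | x : T in A, y : U in B x]| = \sum_(x <- A) #|` B x|.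
Proof.
rewrite card_fset_sum1 big_imfset2 /=; last by move=> [? ?] [? ?] _ _ [-> ->].
by apply: eq_bigr => x _; rewrite card_fset_sum1.
Qed.

Lemma card_fsetM (T U : choiceType) (A : {fset T}) (B : {fset U}) :
  #|` A `*` B| = #|` A| * #|` B|.
Proof.
rewrite card_fset_sum1 big_imfset2 /=; last by move=> [? ?] [? ?] _ _ [-> ->].
by rewrite [#|` A|]card_fset_sum1 big_distrl /=; apply: eq_bigr => x _;
   rewrite mul1n card_fset_sum1.
Qed.

Lemma leq_mul_sum (T : eqType) (s : seq T) (f : T -> nat) m k :
  (forall i, i \in s -> m <= k * f i) -> size s * m <= k * \sum_(i <- s) f i.
Proof.
move=> le_m; rewrite big_distrr -sum1_size big_distrl /= big_seq [X in _ <= X]big_seq.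
by apply: leq_sum => i /le_m; rewrite mul1n.
Qed.

Section Sumsets.
Variable G : zmodType.
Implicit Types (A S X : {fset G}) (a b x : G).

Lemma sumsetP A S x :
  reflect (exists2 a, a \in A & exists2 b, b \in S & x = (a + b)%R)
          (x \in sumset A S).
Proof. exact: imfset2P. Qed.

Lemma sumset_neq0 A S : A != fset0 -> S != fset0 -> sumset A S != fset0.
Proof.
move=> /fset0Pn [a aA] /fset0Pn [b bS]; apply/fset0Pn; exists (a + b)%R.
by apply/sumsetP; exists a => //; exists b.
Qed.

Lemma sumsetSr A S S' : S `<=` S' -> sumset A S `<=` sumset A S'.
Proof.
move=> /fsubsetP sub; apply/fsubsetP => _ /sumsetP [a aA [b bS ->]].
by apply/sumsetP; exists a => //; exists b => //; apply: sub.
Qed.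

Definition sumset_rep A x : G * G :=
  head (0, 0)%R [seq p <- A `*` A | (p.1 + p.2 == x)%R].

Lemma sumset_repP A x : x \in sumset A A ->
  [/\ (sumset_rep A x).1 \in A, (sumset_rep A x).2 \in A
    & ((sumset_rep A x).1 + (sumset_rep A x).2)%R = x].
Proof.
move=> /sumsetP [a aA [b bA ->]]; rewrite /sumset_rep.
case E : [seq p <- _ | _] => [|p s] /=.
  have : (a, b) \in [seq p <- A `*` A | (p.1 + p.2 == a + b)%R].
    by rewrite mem_filter /= eqxx in_fsetM aA bA.
  by rewrite E.
have : p \in [seq p <- A `*` A | (p.1 + p.2 == a + b)%R] by rewrite E mem_head.
by rewrite mem_filter in_fsetM => /andP [/eqP <- /andP [p1A p2A]].
Qed.

Definition partners X A a := [fset b in A | (a + b)%R \in X].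

Lemma in_partners X A a b : (b \in partners X A a) = (b \in A) && ((a + b)%R \in X).
Proof. by rewrite !inE. Qed.

Lemma partners_sub X A a : partners X A a `<=` A.
Proof. by apply/fsubsetP => b; rewrite in_partners => /andP []. Qed.

Lemma card_sumsetU1 A S a : a \in A ->
  3 * #|` partners (sumset A S) A a| <= 2 * #|` A| ->
  3 * #|` sumset A S| + #|` A| <= 3 * #|` sumset A (a |` S)|.
Proof.
set X := sumset A S => aA few_partners.
set Y := [fset (b + a)%R | b in A `\` partners X A a].
have cardY : #|` Y| = #|` A| - #|` partners X A a|.
  rewrite card_in_imfset /=; first by rewrite cardfsDS // partners_sub.
  by move=> b c _ _; apply: addIr.
have XY0 : X `&` Y = fset0.
  apply/fsetP => z; rewrite in_fsetI inE; apply/negbTE/andP.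
  case=> zX /imfsetP [b]; rewrite in_fsetD in_partners /= => /andP [].
  by rewrite addrC => + bA ez; rewrite bA -ez zX.
have XYsub : X `|` Y `<=` sumset A (a |` S).
  rewrite fsubUset sumsetSr ?fsubsetUr //=.
  apply/fsubsetP => _ /imfsetP [b + ->]; rewrite in_fsetD => /andP [_ bA].
  by apply/sumsetP; exists b => //; exists a => //; apply: fsetU11.
have := cardfsUI X Y; rewrite XY0 cardfs0 addn0 cardY.
have := fsubset_leq_card XYsub; have := fsubset_leq_card (partners_sub X A a).
lia.
Qed.

Lemma greedy_sumset A k : exists S, [/\ S `<=` A, #|` S| <= k &
  k * #|` A| <= 3 * #|` sumset A S| \/
  forall a, a \in A -> 2 * #|` A| < 3 * #|` partners (sumset A S) A a|].
Proof.
elim: k => [|k [S [SA Sk [grow|popular]]]].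
- by exists fset0; split; rewrite ?fsub0set ?cardfs0 //; left.
- have [/allP popular|] := boolP (all (fun a => 2 * #|` A| <
                            3 * #|` partners (sumset A S) A a|) A).
    by exists S; split => //; [apply: leqW | right].
  case/allPn => a aA; rewrite -leqNgt => few_partners.
  exists (a |` S); split; first by rewrite fsubUset fsub1set aA.
    by rewrite cardfsU1; exact: leq_add (leq_b1 _) Sk.
  by left; rewrite mulSn addnC (leq_trans _ (card_sumsetU1 aA few_partners))
                   ?leq_add2r.
- by exists S; split => //; [apply: leqW | right].
Qed.

Section PopularPartners.
Variables X A : {fset G}.
Hypothesis popular : forall a, a \in A -> 2 * #|` A| < 3 * #|` partners X A a|.

Lemma card_partnersI_gt b c : b \in A -> c \in A ->
  #|` A| < 3 * #|` partners X A b `&` partners X A c|.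
Proof.
move=> /popular pb /popular pc.
have := cardfsUI (partners X A b) (partners X A c).
have : #|` partners X A b `|` partners X A c| <= #|` A|.
  by apply: fsubset_leq_card; rewrite fsubUset !partners_sub.
lia.
Qed.

(* A pair (b, b') in bridges r1 r2 writes r1 + r2 = (r1 + b) - (b + b') + (b' + r2)
   with all three brackets in X. *)
Definition bridges (r1 r2 : G) : {fset G * G} :=
  [fset (b, b') | b : G in partners X A r1,
                  b' : G in partners X A r2 `&` partners X A b].

Lemma card_bridges_gt r1 r2 : r1 \in A -> r2 \in A ->
  2 * (#|` A| * #|` A|) < 9 * #|` bridges r1 r2|.
Proof.
move=> r1A r2A; have := popular r1A.
have : #|` partners X A r1| * #|` A|.+1 <= 3 * #|` bridges r1 r2|.
  rewrite card_fset_pairs; apply: leq_mul_sum => b.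
  by rewrite in_partners => /andP [bA _]; apply: card_partnersI_gt.
rewrite -/(#|` partners X A r1|); nia.
Qed.

Definition bridge_triple (r p : G * G) : G * (G * G) :=
  ((r.1 + p.1)%R, ((p.1 + p.2)%R, (p.2 + r.2)%R)).

Definition alt_sum (t : G * (G * G)) : G := (t.1 - t.2.1 + t.2.2)%R.

Lemma alt_sum_bridge_triple r p : alt_sum (bridge_triple r p) = (r.1 + r.2)%R.
Proof. by rewrite /alt_sum /= opprD !addrA addrK addrNK. Qed.

Lemma bridge_triple_inj r : injective (bridge_triple r).
Proof. by move=> [b b'] [c c'] [/addrI -> _ /addIr ->]. Qed.

Lemma sumset_cube_bound :
  2 * (#|` A| * #|` A|) * #|` sumset A A| <= 9 * (#|` X| * (#|` X| * #|` X|)).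
Proof.
pose rep := sumset_rep A.
pose D := [fset (x, p) | x : G in sumset A A, p : G * G in bridges (rep x).1 (rep x).2].
pose f (t : G * (G * G)) := bridge_triple (rep t.1) t.2.
have cardD : #|` sumset A A| * (2 * (#|` A| * #|` A|)) <= 9 * #|` D|.
  rewrite card_fset_pairs; apply: leq_mul_sum => x /sumset_repP [r1A r2A _].
  exact/ltnW/card_bridges_gt.
have f_inj : {in D &, injective f}.
  move=> [x p] [y q] /imfset2P [x' /sumset_repP [_ _ ex] [p' _ [? ?]]].
  move=> /imfset2P [y' /sumset_repP [_ _ ey] [q' _ [? ?]]]; subst x' p' y' q'.
  move=> e; have := congr1 alt_sum e; rewrite !alt_sum_bridge_triple ex ey.
  by move=> exy; move: e; rewrite /f /= exy => /bridge_triple_inj ->.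
have fD : f @` D `<=` X `*` (X `*` X).
  apply/fsubsetP => _ /imfsetP [_ /imfset2P [x _ [[b b'] bb' ->]] ->].
  case/imfset2P: bb' => b1 + [b2 + [? ?]]; subst b1 b2.
  rewrite in_partners in_fsetI !in_partners.
  move=> /andP [_ Xb] /andP [/andP [_ Xb'] /andP [_ Xbb']].
  by rewrite !in_fsetM /f /= Xb Xbb' addrC Xb'.
rewrite mulnC (leq_trans cardD) // leq_mul2l /=.
move/card_in_imfsetP/eqP: f_inj => <-.
by rewrite -!card_fsetM fsubset_leq_card.
Qed.

End PopularPartners.
End Sumsets.

(* Imported only now: Reals rebinds the %R delimiter used above for ring_scope. *)
From Stdlib Require Import Reals Lra Psatz.

Lemma Rle_of_cube_le (x y : R) : (0 <= y)%R -> (x * x * x <= y * y * y)%R -> (x <= y)%R.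
Proof.
move=> y0 cube_le; apply: Rnot_lt_le => yx.
have sq_lt : (y * y < x * x)%R by nra.
have : (y * y * y < x * x * x)%R by nra.
lra.
Qed.

Lemma doubling_cube_root_le (G : zmodType) (A : {fset G}) (m : nat) :
  A != fset0 ->
  2 * (#|` A| * #|` A|) * #|` sumset A A| <= 9 * (m * (m * m)) ->
  (1 / 3 * Rpower (doubling A) (1 / 3) * INR #|` A| <= INR m)%R.
Proof.
move=> A0 /leP /le_INR; rewrite !mult_INR /=.
have : (0 < INR #|` A|)%R by apply/lt_0_INR/ltP; rewrite cardfs_gt0.
have : (0 < INR #|` sumset A A|)%R.
  by apply/lt_0_INR/ltP; rewrite cardfs_gt0 sumset_neq0.
set n := INR #|` A|; set K := INR #|` sumset A A| => K0 n0 cube_le.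
set t := Rpower _ _.
have t0 : (0 < t)%R by apply: exp_pos.
have t3 : (t ^ 3 = K / n)%R.
  rewrite -Rpower_pow // Rpower_mult.
  replace (1 / 3 * INR 3)%R with 1%R by (simpl; field).
  by rewrite Rpower_1 //; apply: Rdiv_lt_0_compat.
have lhs3 : ((1 / 3 * t * n) * (1 / 3 * t * n) * (1 / 3 * t * n) = K * (n * n) / 27)%R.
  have -> : K = (t ^ 3 * n)%R by rewrite t3; field; lra.
  by simpl; field.
apply: Rle_of_cube_le; first exact: pos_INR.
rewrite lhs3; nra.
Qed.

Theorem theorem1p1 :
  exists c : R, (0 < c)%R /\
    forall (G : zmodType) (A : {fset G}), A != fset0 ->
    forall s : nat, (1 <= s)%N ->
      exists As : {fset G}, As `<=` A /\ (#|` As| <= s)%N /\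
        (c * Rmin (Rpower (doubling A) (1/3)) (INR s) * INR #|` A|
           <= INR #|` sumset A As|)%R.
Proof.
exists (1 / 3)%R; split; first lra.
move=> G A A0 s _; have [S [SA Ss alt]] := greedy_sumset A s.
exists S; do 2!split => //.
set t := Rpower _ _; set n := INR #|` A|.
have n0 : (0 <= n)%R by apply: pos_INR.
case: alt => [grow|popular].
- have := Rmult_le_compat_r n _ _ n0 (Rmin_r t (INR s)).
  move/leP/le_INR: grow; rewrite !mult_INR -/n /=; lra.
- have := Rmult_le_compat_r n _ _ n0 (Rmin_l t (INR s)).
  have := doubling_cube_root_le A0 (sumset_cube_bound popular).
  rewrite -/t -/n; lra.
Qed.
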